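(* For $\mathbf p\in\mathbb R^k$ with all $p_j>0$ and $\sum_jp_j=1$, define $$R(\mathbf p)=\frac{\|\mathbf p\|_{1/2}^{1/2}}{\|\mathbf p\|_{2/3}},\qquad\text{where }\|\mathbf p\|_r=\Big(\sum_{j=1}^kp_j^r\Big)^{1/r}.$$ Then $R(\mathbf p)\ge1$ for every such $\mathbf p$, and $\sup_{\mathbf p}R(\mathbf p)\in\Theta(k^{1/4})$, the supremum taken over all probability vectors in $\mathbb R^k$ with positive entries; this order is tight. *)

From HB Require Import structures.
From mathcomp Require Import all_boot all_order all_algebra.
From mathcomp Require Import all_classical all_reals all_analysis.
Set Implicit Arguments. Unset Strict Implicit. Unset Printing Implicit Defensive.
Import Order.TTheory GRing.Theory Num.Theory.
Local Open Scope ring_scope.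
Local Open Scope classical_set_scope.

Definition pnorm (R : realType) (k : nat) (r : R) (p : 'I_k -> R) : R :=
  (\sum_(j < k) p j `^ r) `^ r^-1.

Definition Rratio (R : realType) (k : nat) (p : 'I_k -> R) : R :=
  pnorm (1 / 2) p `^ (1 / 2) / pnorm (2 / 3) p.

Definition probvec (R : realType) (k : nat) (p : 'I_k -> R) : Prop :=
  (forall j, 0 < p j) /\ \sum_(j < k) p j = 1.

Definition Rsup (R : realType) (k : nat) : R :=
  sup [set Rratio p | p in [set p : 'I_k -> R | probvec p]].

From HB Require Import structures.
From mathcomp Require Import all_boot all_order all_algebra.
From mathcomp Require Import all_classical all_reals all_analysis.
From mathcomp Require Import ring lra.
Set Implicit Arguments.
Unset Strict Implicit.
Unset Printing Implicit Defensive.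
Import Order.TTheory GRing.Theory Num.Theory.
Local Open Scope ring_scope.

(** Put [q_j = p_j^(1/6)] and [S_n = sum_j q_j^n]; then [S_6 = 1] and
    [R(p) = S_3 / S_4^(3/2)].  Both bounds come from weighted AM-GM applied
    termwise at the right scale: [3 mu q^4 <= mu^3 q^6 + 2 q^3] with
    [mu^3 = S_3] sums to [S_4 <= S_3^(2/3)], i.e. [R(p) >= 1]; and
    [4 (t q)^3 s <= 3 (t q)^4 + s^4] with [t^4 = k], [s^4 = S_4] sums to
    Hoelder's [S_3 <= k^(1/4) S_4^(3/4)], which is at most [k^(1/4) S_4^(3/2)]
    because [S_4 >= S_6 = 1].  Conversely, one large entry together with
    [k - 1] entries equal to [k^(-3/2)] gives [R(p) >= k^(1/4) / 8]. *)

Section AGM.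
Variable R : realDomainType.

Lemma ler_AGM3 (a b : R) : 0 <= a -> 0 <= b ->
  3 * a * b ^+ 2 <= a ^+ 3 + 2 * b ^+ 3.
Proof.
move=> a0 b0; rewrite -subr_ge0.
have -> : a ^+ 3 + 2 * b ^+ 3 - 3 * a * b ^+ 2 = (a - b) ^+ 2 * (a + 2 * b).
  by ring.
by rewrite mulr_ge0 ?sqr_ge0 // addr_ge0 // mulr_ge0.
Qed.

Lemma ler_AGM4 (a b : R) : 4 * a ^+ 3 * b <= 3 * a ^+ 4 + b ^+ 4.
Proof.
rewrite -subr_ge0.
have -> : 3 * a ^+ 4 + b ^+ 4 - 4 * a ^+ 3 * b
          = (a - b) ^+ 2 * (2 * a ^+ 2 + (a + b) ^+ 2) by ring.
by rewrite mulr_ge0 ?sqr_ge0 // addr_ge0 ?sqr_ge0 // mulr_ge0 ?sqr_ge0.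
Qed.

End AGM.

Section PowR.
Variable R : realType.
Implicit Types x r : R.

Lemma exprn_powR x r n : (x `^ r) ^+ n = x `^ (r * n%:R).
Proof. by rewrite powRrM powR_mulrn // powR_ge0. Qed.

Lemma powR_exprn x r n : 0 <= x -> (x ^+ n) `^ r = x `^ (n%:R * r).
Proof. by move=> x0; rewrite -powR_mulrn // -powRrM. Qed.

Lemma exprn_powR_invn x n : 0 <= x -> (0 < n)%N -> (x `^ n%:R^-1) ^+ n = x.
Proof.
by move=> x0 n0; rewrite exprn_powR mulVf ?pnatr_eq0 -?lt0n // powRr1.
Qed.

Lemma powR_ge1 x r : 1 <= x -> 0 <= r -> 1 <= x `^ r.
Proof. by move=> x1 r0; rewrite -(powRr0 x) ler_powR. Qed.

Lemma powR_le1 x r : 0 < x <= 1 -> 0 <= r -> x `^ r <= 1.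
Proof. by move=> x01 r0; rewrite -(powRr0 x) ger_powR. Qed.

End PowR.

Section PowerSums.
Variables (R : realType) (k : nat).

Definition psum (q : 'I_k -> R) n := \sum_(j < k) q j ^+ n.

Variable q : 'I_k -> R.
Hypothesis q_ge0 : forall j, 0 <= q j.

Lemma psum_ge0 n : 0 <= psum q n.
Proof. by apply: sumr_ge0 => j _; rewrite exprn_ge0. Qed.

Lemma psum_eq1_le1 n j : (0 < n)%N -> psum q n = 1 -> q j <= 1.
Proof.
move=> n0 qn1; rewrite -(expr_le1 n0) // -qn1 /psum (bigD1 j) //= lerDl.
by apply: sumr_ge0 => i _; rewrite exprn_ge0.
Qed.

Lemma psum_le_psum m n : (n <= m)%N -> (forall j, q j <= 1) ->
  psum q m <= psum q n.
Proof. by move=> nm q1; apply: ler_sum => j _; exact: ler_wiXn2l. Qed.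

Lemma psum4_powR_le_psum3 : psum q 6 = 1 -> psum q 4 `^ (3/2) <= psum q 3.
Proof.
move=> q6.
have q1 j : q j <= 1 by exact: psum_eq1_le1 q6.
have S3_ge1 : 1 <= psum q 3 by rewrite -q6 psum_le_psum.
set mu := psum q 3 `^ 3^-1.
have mu3 : mu ^+ 3 = psum q 3 by rewrite exprn_powR_invn // (le_trans ler01).
have mu_gt0 : 0 < mu by rewrite powR_gt0 // (lt_le_trans ltr01).
have : 3 * mu * psum q 4 <= mu ^+ 3 * psum q 6 + 2 * psum q 3.
  rewrite /psum !mulr_sumr -big_split /=; apply: ler_sum => j _.
  have := ler_AGM3 (mulr_ge0 (ltW mu_gt0) (exprn_ge0 2 (q_ge0 j))) (q_ge0 j).
  lra.
rewrite q6 -mu3 => AGM_sum.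
have S4_le : psum q 4 <= mu ^+ 2.
  rewrite -(ler_pM2l (_ : 0 < 3 * mu)) ?mulr_gt0 //; apply: le_trans AGM_sum _.
  lra.
apply: le_trans (ge0_ler_powR _ _ _ S4_le) _;
  rewrite ?nnegrE ?psum_ge0 ?sqr_ge0 //.
have mu_ge0 := ltW mu_gt0.
by rewrite powR_exprn // (_ : 2%:R * (3/2) = 3%:R) ?powR_mulrn //; field.
Qed.

Lemma psum3_le_Hoelder : 0 < psum q 4 ->
  psum q 3 <= k%:R `^ (1/4) * psum q 4 `^ (3/4).
Proof.
move=> S4_gt0.
have k_gt0 : (0 < k)%N.
  rewrite lt0n; apply: contraTneq S4_gt0 => k0.
  by rewrite /psum big1 ?ltxx // => -[j jk]; exfalso; rewrite k0 ltn0 in jk.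
set t := k%:R `^ (1/4); set s := psum q 4 `^ (1/4).
have t4 : t ^+ 4 = k%:R by rewrite /t div1r exprn_powR_invn.
have s4 : s ^+ 4 = psum q 4 by rewrite /s div1r exprn_powR_invn // ltW.
have t_gt0 : 0 < t by rewrite powR_gt0 // ltr0n.
have s_gt0 : 0 < s by rewrite powR_gt0.
rewrite (_ : psum q 4 `^ (3/4) = s ^+ 3); last first.
  by rewrite /s exprn_powR; congr (_ `^ _); lra.
have : 4 * t ^+ 3 * s * psum q 3 <= 3 * t ^+ 4 * psum q 4 + \sum_(j < k) s ^+ 4.
  rewrite /psum !mulr_sumr -big_split /=; apply: ler_sum => j _.
  have := ler_AGM4 (t * q j) s; lra.
rewrite sumr_const card_ord -[s ^+ 4 *+ k]mulr_natl -t4 -s4 => AGM_sum.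
rewrite -(ler_pM2l (_ : 0 < 4 * t ^+ 3 * s)) ?mulr_gt0 ?exprn_gt0 //.
apply: le_trans AGM_sum _; lra.
Qed.

End PowerSums.

Lemma psum_powR_sixth (R : realType) k (p : 'I_k -> R) n :
  psum (fun j => p j `^ 6^-1) n = \sum_(j < k) p j `^ (n%:R / 6).
Proof. by apply: eq_bigr => j _; rewrite exprn_powR mulrC. Qed.

Lemma RratioE (R : realType) k (p : 'I_k -> R) : (forall j, 0 <= p j) ->
  Rratio p = (\sum_(j < k) p j `^ (1/2)) / (\sum_(j < k) p j `^ (2/3)) `^ (3/2).
Proof.
move=> p0; rewrite /Rratio /pnorm -powRrM mulVf ?powRr1; last 2 first.
- by apply: sumr_ge0 => j _; exact: powR_ge0.
- by rewrite div1r invr_eq0.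
by congr (_ / _ `^ _); rewrite invf_div; lra.
Qed.

Lemma Rratio_bounds (R : realType) k (p : 'I_k -> R) : probvec p ->
  1 <= Rratio p /\ Rratio p <= k%:R `^ (1/4).
Proof.
move=> [p_gt0 p_sum1]; have p0 j := ltW (p_gt0 j).
rewrite RratioE // (_ : 1/2 = 3%:R/6) 1?(_ : 2/3 = 4%:R/6); try by field.
rewrite -!psum_powR_sixth; set q := fun j => p j `^ 6^-1.
have q0 j : 0 <= q j by exact: powR_ge0.
have q6 : psum q 6 = 1.
  by rewrite -p_sum1; apply: eq_bigr => j _; rewrite exprn_powR_invn.
have S4_ge1 : 1 <= psum q 4.
  by rewrite -q6 psum_le_psum // => j; exact: psum_eq1_le1 q6.
have S4_pow_gt0 : 0 < psum q 4 `^ (3/2).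
  by rewrite powR_gt0 // (lt_le_trans ltr01).
split; first by rewrite ler_pdivlMr // mul1r psum4_powR_le_psum3.
rewrite ler_pdivrMr //; apply: le_trans (psum3_le_Hoelder _) _.
  exact: lt_le_trans ltr01 S4_ge1.
by rewrite ler_wpM2l ?powR_ge0 ?ler_powR //; lra.
Qed.

Section Spike.
Variables (R : realType) (k : nat) (i0 : 'I_k).

Definition spike (a e : R) : 'I_k -> R := fun j => if j == i0 then a else e.

Lemma sum_spike (f : R -> R) a e :
  \sum_(j < k) f (spike a e j) = f a + k.-1%:R * f e.
Proof.
rewrite (bigD1 i0) //= /spike eqxx; congr (_ + _).
rewrite (eq_bigr (fun=> f e)) => [|j /negbTE -> //].
by rewrite sumr_const cardC1 card_ord mulr_natl.
Qed.

Variable e : R.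
Hypotheses (e_gt0 : 0 < e) (ke_lt1 : k.-1%:R * e < 1).

Lemma probvec_spike : probvec (spike (1 - k.-1%:R * e) e).
Proof.
split => [j|]; first by rewrite /spike; case: ifP; rewrite // subr_gt0.
by have /= -> := sum_spike id (1 - k.-1%:R * e) e; rewrite subrK.
Qed.

Lemma Rratio_spike_ge :
  k.-1%:R * e `^ (1/2) / (1 + k.-1%:R * e `^ (2/3)) `^ (3/2)
    <= Rratio (spike (1 - k.-1%:R * e) e).
Proof.
set a := 1 - _.
have a_gt0 : 0 < a by rewrite subr_gt0.
have a_le1 : a <= 1 by rewrite lerBlDr lerDl mulr_ge0 // ltW.
have spike_ge0 j : 0 <= spike a e j.
  by rewrite /spike; case: ifP => _; exact: ltW.
rewrite RratioE // (sum_spike (fun x => x `^ (1/2))).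
rewrite (sum_spike (fun x => x `^ (2/3))).
have tail_ge0 r : 0 <= k.-1%:R * e `^ r by rewrite mulr_ge0 ?powR_ge0.
have den_gt0 : 0 < a `^ (2/3) + k.-1%:R * e `^ (2/3).
  by rewrite ltr_pwDl ?powR_gt0.
have den_le : a `^ (2/3) + k.-1%:R * e `^ (2/3) <= 1 + k.-1%:R * e `^ (2/3).
  by rewrite lerD2r powR_le1 ?a_gt0 //; lra.
apply: ler_pM; rewrite ?invr_ge0 ?powR_ge0 ?lerDr ?powR_ge0 //.
rewrite lef_pV2 ?posrE ?powR_gt0 ?(lt_le_trans den_gt0 den_le) //.
have den_ge0 := ltW den_gt0.
by rewrite ge0_ler_powR ?nnegrE ?den_ge0 ?(le_trans den_ge0 den_le) //; lra.
Qed.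

End Spike.

Lemma exists_probvec_Rratio_ge (R : realType) k : (2 <= k)%N ->
  exists p : 'I_k -> R, probvec p /\ 1/8 * k%:R `^ (1/4) <= Rratio p.
Proof.
move=> k_ge2; have k_gt0 : (0 < k)%N by exact: leq_trans k_ge2.
have k_ge2R : 2 <= k%:R :> R by rewrite ler_nat.
set t := k%:R `^ (1/4).
have t4 : t ^+ 4 = k%:R by rewrite /t div1r exprn_powR_invn.
have t_ge1 : 1 <= t by rewrite powR_ge1 ?ler1n //; lra.
set u := t^-1.
have u_gt0 : 0 < u by rewrite invr_gt0 (lt_le_trans ltr01).
have u_le1 : u <= 1 by rewrite invf_le1 // (lt_le_trans ltr01).
have ku4 : k%:R * u ^+ 4 = 1.
  by rewrite -t4 -exprMn mulfV ?expr1n // gt_eqF // (lt_le_trans ltr01).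
have t_eq : t = k%:R * u ^+ 3.
  by rewrite -t4 /u; field; rewrite gt_eqF // (lt_le_trans ltr01).
have km1 : k.-1%:R = k%:R - 1 :> R by rewrite -subn1 natrB.
have u2_le1 : u ^+ 2 <= 1 by rewrite expr_le1 // ltW.
have u6_gt0 : 0 < u ^+ 6 by rewrite exprn_gt0.
have ke_lt1 : k.-1%:R * u ^+ 6 < 1.
  have -> : k.-1%:R * u ^+ 6 = k%:R * u ^+ 4 * u ^+ 2 - u ^+ 6.
    by rewrite km1; ring.
  by rewrite ku4 mul1r; lra.
exists (spike (Ordinal k_gt0) (1 - k.-1%:R * u ^+ 6) (u ^+ 6)).
split; first exact: probvec_spike.
apply: le_trans (Rratio_spike_ge _ u6_gt0 ke_lt1).
have u_ge0 := ltW u_gt0.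
rewrite !powR_exprn // (_ : 6%:R * (1/2) = 3%:R) 1?(_ : 6%:R * (2/3) = 4%:R);
  try by field.
rewrite !powR_mulrn //.
have den_le4 : (1 + k.-1%:R * u ^+ 4) `^ (3/2) <= 4.
  have den_le2 : 1 + k.-1%:R * u ^+ 4 <= 2.
    by rewrite km1 mulrBl ku4 mul1r; have := exprn_gt0 4 u_gt0; lra.
  apply: (le_trans (ge0_ler_powR _ _ _ den_le2)); rewrite ?nnegrE //.
    by rewrite addr_ge0 // mulr_ge0 ?exprn_ge0.
  by rewrite (le_trans (ler_powR _ (_ : 3/2 <= 2%:R))) ?powR_mulrn //; lra.
have num_ge : t / 2 <= k.-1%:R * u ^+ 3.
  by rewrite t_eq km1; have := exprn_gt0 3 u_gt0; nra.
have den_gt0 : 0 < (1 + k.-1%:R * u ^+ 4) `^ (3/2).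
  by rewrite powR_gt0 // ltr_pwDl ?mulr_ge0 ?exprn_ge0.
rewrite ler_pdivlMr //; nra.
Qed.

Theorem lemma5 (R : realType) :
  (forall (k : nat) (p : 'I_k -> R), probvec p -> 1 <= Rratio p) /\
  (exists (c C : R) (K : nat), 0 < c /\ 0 < C /\
     forall k : nat, (K <= k)%N ->
       c * (k%:R `^ (1 / 4)) <= Rsup R k /\ Rsup R k <= C * (k%:R `^ (1 / 4))).
Proof.
split=> [k p /Rratio_bounds [] //|].
exists (1/8), 1, 2%N; split; first lra; split; first lra.
move=> k k_ge2; have [w [w_prob w_large]] := exists_probvec_Rratio_ge R k_ge2.
have ub : ubound [set Rratio p | p in [set p : 'I_k -> R | probvec p]]
                 (k%:R `^ (1/4)).
  by move=> _ [p /Rratio_bounds [_ ?] <-].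
split; last by rewrite mul1r; apply: ge_sup ub; exists (Rratio w), w.
by apply: le_trans w_large (ub_le_sup _ _); [exists (k%:R `^ (1/4)) | exists w].
Qed.
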